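(* Let $\Omega=[0,L]$ with $L>0$, and let $\boldsymbol{\varphi},\mathbf{v}_\varphi,\mathbf{N},\mathbf{M}:[0,L]\to\mathbb{R}^3$ and $\mathbf{d}=(\mathbf{d}_1,\mathbf{d}_2,\mathbf{d}_3),\ \mathbf{v}_d=(\mathbf{v}_{d,1},\mathbf{v}_{d,2},\mathbf{v}_{d,3}):[0,L]\to\mathbb{R}^9$ be continuously differentiable, where for every $s\in[0,L]$ the vectors $\mathbf{d}_1(s),\mathbf{d}_2(s),\mathbf{d}_3(s)$ are orthonormal with $\mathbf{d}_3=\mathbf{d}_1\times\mathbf{d}_2$. Set $\mathbf{R}=[\mathbf{d}_1\ \mathbf{d}_2\ \mathbf{d}_3]\in\mathbb{R}^{3\times3}$, $\mathbf{n}=\mathbf{R}\mathbf{N}$, $\mathbf{m}=\mathbf{R}\mathbf{M}$ and $\boldsymbol{\omega}=\tfrac12\sum_{i=1}^3 \mathbf{d}_i\times\mathbf{v}_{d,i}$. Then $$\int_0^L\Big(\mathbf{N}^\top\big(\mathbf{R}^\top\partial_s\mathbf{v}_\varphi+\mathbf{J}_N(\partial_s\boldsymbol{\varphi})^\top\mathbf{v}_d\big)+\mathbf{M}^\top\mathcal{J}_K\mathbf{v}_d\Big)\,ds-\int_0^L\Big(-\mathbf{v}_\varphi^\top\partial_s(\mathbf{R}\mathbf{N})+\mathbf{v}_d^\top\big(\mathbf{J}_N(\partial_s\boldsymbol{\varphi})\mathbf{N}+\mathcal{J}_M\mathbf{M}\big)\Big)\,ds=\Big[\mathbf{v}_\v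arphi^\top\mathbf{n}+\boldsymbol{\omega}^\top\mathbf{m}\Big]_{s=0}^{s=L}.$$
   Context: For $\mathbf{a}\in\mathbb{R}^3$, $\mathbf{J}_N(\mathbf{a})\in\mathbb{R}^{9\times3}$ is the block-diagonal matrix with the column $\mathbf{a}$ in each of its three diagonal $3\times1$ blocks (so $\mathbf{J}_N(\mathbf{a})^\top\mathbf{d}=(\mathbf{d}_1^\top\mathbf{a},\mathbf{d}_2^\top\mathbf{a},\mathbf{d}_3^\top\mathbf{a})$). For $\mathbf{d}=(\mathbf{d}_1,\mathbf{d}_2,\mathbf{d}_3)\in\mathbb{R}^9$, $\mathbf{L}(\mathbf{d})\in\mathbb{R}^{3\times9}$ is $\frac12\begin{bmatrix}\mathbf{0}&-\mathbf{d}_3^\top&\mathbf{d}_2^\top\\ \mathbf{d}_3^\top&\mathbf{0}&-\mathbf{d}_1^\top\\ -\mathbf{d}_2^\top&\mathbf{d}_1^\top&\mathbf{0}\end{bmatrix}$. The operators are $\mathcal{J}_K\mathbf{v}_d=\mathbf{L}(\partial_s\mathbf{d})\mathbf{v}_d-\mathbf{L}(\mathbf{d})\partial_s\mathbf{v}_d$ and $\mathcal{J}_M\mathbf{M}=\mathbf{L}(\partial_s\mathbf{d})^\top\mathbf{M}+\partial_s\big(\mathbf{L}(\mathbf{d})^\top\mathbf{M}\big)$. $[f]_{s=0}^{s=L}=f(L)-f(0)$. *)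

From Stdlib Require Import Reals.
From Coquelicot Require Import Coquelicot.
Open Scope R_scope.

Inductive I3 := i1 | i2 | i3.

Definition I3_eqb (i j : I3) : bool :=
  match i, j with
  | i1, i1 | i2, i2 | i3, i3 => true
  | _, _ => false
  end.

Definition sum3 (f : I3 -> R) : R := f i1 + f i2 + f i3.

(* Vectors of R^3 and of R^9 = (R^3)^3; a 9-vector d is (d i1, d i2, d i3). *)
Definition vec := I3 -> R.
Definition vec9 := I3 -> vec.

Definition dot (a b : vec) : R := sum3 (fun k => a k * b k).
Definition dot9 (a b : vec9) : R := sum3 (fun i => dot (a i) (b i)).

Definition cross (a b : vec) : vec := fun k =>
  match k with
  | i1 => a i2 * b i3 - a i3 * b i2
  | i2 => a i3 * b i1 - a i1 * b i3
  | i3 => a i1 * b i2 - a i2 * b i1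
  end.

Definition vadd (a b : vec) : vec := fun k => a k + b k.
Definition vsub (a b : vec) : vec := fun k => a k - b k.
Definition vadd9 (a b : vec9) : vec9 := fun i k => a i k + b i k.

(* R = [d1 d2 d3] : entry (k, j) is the k-th component of d_j. *)
Definition Rmat (d : vec9) (k j : I3) : R := d j k.
Definition Rmul (d : vec9) (v : vec) : vec := fun k => sum3 (fun j => Rmat d k j * v j).
Definition RTmul (d : vec9) (w : vec) : vec := fun j => sum3 (fun k => Rmat d k j * w k).

(* J_N(a) in R^{9x3}: entry in row (block i, component k), column j is
   a k if i = j, and 0 otherwise (block diagonal with column a). *)
Definition JN (a : vec) (i k j : I3) : R := if I3_eqb i j then a k else 0.
Definition JNmul (a : vec) (x : vec) : vec9 := fun i k => sum3 (fun j => JN a i k j * x j).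
Definition JNTmul (a : vec) (y : vec9) : vec := fun j => sum3 (fun i => sum3 (fun k => JN a i k j * y i k)).

(* L(d) in R^{3x9}: Lmat d r i k = entry in row r, column (block i, component k).
   Row 1 = 1/2 [0, -d3^T, d2^T], row 2 = 1/2 [d3^T, 0, -d1^T],
   row 3 = 1/2 [-d2^T, d1^T, 0]. *)
Definition Lmat (d : vec9) (r i k : I3) : R :=
  match r, i with
  | i1, i1 => 0
  | i1, i2 => - (d i3 k) / 2
  | i1, i3 => d i2 k / 2
  | i2, i1 => d i3 k / 2
  | i2, i2 => 0
  | i2, i3 => - (d i1 k) / 2
  | i3, i1 => - (d i2 k) / 2
  | i3, i2 => d i1 k / 2
  | i3, i3 => 0
  end.
Definition Lmul (d : vec9) (v : vec9) : vec := fun r => sum3 (fun i => sum3 (fun k => Lmat d r i k * v i k)).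
Definition LTmul (d : vec9) (x : vec) : vec9 := fun i k => sum3 (fun r => Lmat d r i k * x r).

Definition dvec (f : R -> vec) (s : R) : vec := fun k => Derive (fun t => f t k) s.
Definition dvec9 (f : R -> vec9) (s : R) : vec9 := fun i k => Derive (fun t => f t i k) s.

Definition JK (d vd : R -> vec9) (s : R) : vec :=
  vsub (Lmul (dvec9 d s) (vd s)) (Lmul (d s) (dvec9 vd s)).
Definition JM (d : R -> vec9) (M : R -> vec) (s : R) : vec9 :=
  vadd9 (LTmul (dvec9 d s) (M s)) (dvec9 (fun t => LTmul (d t) (M t)) s).

Definition omega (d vd : vec9) : vec :=
  fun k => (sum3 (fun i => cross (d i) (vd i) k)) / 2.

Definition C1_on (a b : R) (f : R -> R) : Prop :=
  forall s, a <= s <= b ->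
    ex_derive f s /\
    filterlim (Derive f) (within (fun t => a <= t <= b) (locally s)) (locally (Derive f s)).

Definition C1_vec (a b : R) (f : R -> vec) : Prop := forall k, C1_on a b (fun t => f t k).
Definition C1_vec9 (a b : R) (f : R -> vec9) : Prop := forall i k, C1_on a b (fun t => f t i k).

Definition frame (d : vec9) : Prop :=
  (forall i j, dot (d i) (d j) = if I3_eqb i j then 1 else 0) /\
  d i3 = cross (d i1) (d i2).

From Stdlib Require Import Reals Lra FunctionalExtensionality.
From Coquelicot Require Import Coquelicot.
Open Scope R_scope.

(* Integrating by parts, the difference of the two integrands is the derivative of
   F = v_phi . (R N) - M . L(d) v_d, so the integral equals F(L) - F(0).  For a
   right-handed orthonormal frame the cyclic relations d_i x d_j = d_k give
   omega . d_j = - (L(d) v_d)_j, hence omega . (R M) = - M . L(d) v_d and F is the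
   boundary term v_phi . n + omega . m. *)

Lemma cross_anticomm (a b : vec) : cross a b = fun k => - cross b a k.
Proof. extensionality k; destruct k; simpl; ring. Qed.

Lemma cross_cross (a b c : vec) :
  cross a (cross b c) = fun k => dot a c * b k - dot a b * c k.
Proof. extensionality k; destruct k; unfold dot, sum3; simpl; ring. Qed.

Lemma frame_cross (d : vec9) : frame d ->
  cross (d i1) (d i2) = d i3 /\ cross (d i2) (d i3) = d i1 /\ cross (d i3) (d i1) = d i2.
Proof.
  intros [gram d3E].
  pose proof (gram i1 i1) as g11; pose proof (gram i1 i2) as g12;
  pose proof (gram i2 i1) as g21; pose proof (gram i2 i2) as g22; simpl in *.
  split; [|split]; [easy| |]; rewrite ?(cross_anticomm (d i3)), d3E, cross_cross;
    extensionality k; rewrite ?g11, ?g12, ?g21, ?g22; simpl; ring.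
Qed.

Lemma dot_omega (d v : vec9) (c : vec) :
  dot (omega d v) c =
  (dot (v i1) (cross c (d i1)) + dot (v i2) (cross c (d i2)) + dot (v i3) (cross c (d i3))) / 2.
Proof. unfold dot, omega, sum3; simpl; field. Qed.

Lemma dot_omega_frame_col (d v : vec9) (j : I3) : frame d ->
  dot (omega d v) (d j) = - Lmul d v j.
Proof.
  intros fr; destruct (frame_cross d fr) as (c12 & c23 & c31).
  rewrite dot_omega; destruct j;
    [ rewrite c12, (cross_anticomm (d i1) (d i3)), c31
    | rewrite (cross_anticomm (d i2) (d i1)), c12, c23
    | rewrite c31, (cross_anticomm (d i3) (d i2)), c23 ];
    unfold dot, cross, Lmul, Lmat, sum3; field.
Qed.

Lemma dot_omega_frame (d v : vec9) (m : vec) : frame d ->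
  dot (omega d v) (Rmul d m) = - dot m (Lmul d v).
Proof.
  intros fr.
  assert (dot_Rmul : forall w, dot w (Rmul d m) =
    m i1 * dot w (d i1) + m i2 * dot w (d i2) + m i3 * dot w (d i3)).
  { intros w; unfold dot, Rmul, Rmat, sum3; ring. }
  rewrite dot_Rmul, !dot_omega_frame_col by exact fr.
  unfold dot, sum3; ring.
Qed.

Section Segment.
Variables a b : R.
Hypothesis hab : a <= b.

Definition clamp (t : R) : R := Rmax a (Rmin t b).

Lemma clamp_in_segment (t : R) : a <= clamp t <= b.
Proof. unfold clamp, Rmax, Rmin; repeat destruct Rle_dec; lra. Qed.

Lemma clamp_id (t : R) : a <= t <= b -> clamp t = t.
Proof. intros Ht; unfold clamp, Rmax, Rmin; repeat destruct Rle_dec; lra. Qed.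

Lemma continuous_clamp (t : R) : continuous clamp t.
Proof.
  apply filterlim_locally; intros eps; exists eps; intros u Hu.
  apply (Rle_lt_trans _ (Rabs (u - t))); [|exact Hu].
  change (Rabs (clamp u - clamp t) <= Rabs (u - t)).
  unfold clamp, Rmax, Rmin, Rabs; repeat destruct Rle_dec; repeat destruct Rcase_abs; lra.
Qed.

(* Continuity relative to [a, b], encoded as continuity of [f \o clamp] at the
   points of [a, b] so that Coquelicot's two-sided lemmas apply. *)
Definition seg_continuous (f : R -> R) : Prop :=
  forall s, a <= s <= b -> continuous (fun t => f (clamp t)) s.

Definition is_C1_derive (f f' : R -> R) : Prop :=
  (forall s, a <= s <= b -> is_derive f s (f' s)) /\ seg_continuous f'.

Lemma seg_continuous_ext (f g : R -> R) :
  (forall s, a <= s <= b -> f s = g s) -> seg_continuous g -> seg_continuous f.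
Proof.
  intros fg Hg s Hs; apply (continuous_ext (fun t => g (clamp t))); [|exact (Hg s Hs)].
  intros t; rewrite fg; [reflexivity | apply clamp_in_segment].
Qed.

Lemma seg_continuous_const (c : R) : seg_continuous (fun _ => c).
Proof. intros s _; apply continuous_const. Qed.

Lemma seg_continuous_plus (f g : R -> R) :
  seg_continuous f -> seg_continuous g -> seg_continuous (fun t => f t + g t).
Proof. intros Hf Hg s Hs; exact (continuous_plus _ _ _ (Hf s Hs) (Hg s Hs)). Qed.

Lemma seg_continuous_opp (f : R -> R) :
  seg_continuous f -> seg_continuous (fun t => - f t).
Proof. intros Hf s Hs; exact (continuous_opp _ _ (Hf s Hs)). Qed.

Lemma seg_continuous_mult (f g : R -> R) :
  seg_continuous f -> seg_continuous g -> seg_continuous (fun t => f t * g t).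
Proof. intros Hf Hg s Hs; exact (continuous_mult _ _ _ (Hf s Hs) (Hg s Hs)). Qed.

Lemma seg_continuous_continuous (f : R -> R) :
  (forall s, a <= s <= b -> continuous f s) -> seg_continuous f.
Proof.
  intros Hf s Hs; apply continuous_comp; [apply continuous_clamp|].
  apply Hf, clamp_in_segment.
Qed.

Lemma seg_continuous_within (f : R -> R) :
  (forall s, a <= s <= b ->
     filterlim f (within (fun t => a <= t <= b) (locally s)) (locally (f s))) ->
  seg_continuous f.
Proof.
  intros Hf s Hs; unfold continuous; rewrite (clamp_id s Hs).
  apply (filterlim_comp _ _ _ clamp f _ (within (fun t => a <= t <= b) (locally s)));
    [|exact (Hf s Hs)].
  intros P HP; pose proof (continuous_clamp s) as Hc; unfold continuous in Hc.
  rewrite clamp_id in Hc by exact Hs.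
  exact (filter_imp _ _ (fun t HPt => HPt (clamp_in_segment t)) (Hc _ HP)).
Qed.

Lemma seg_continuous_C1 (f f' : R -> R) : is_C1_derive f f' -> seg_continuous f.
Proof.
  intros [Df _]; apply seg_continuous_continuous; intros s Hs.
  apply (ex_derive_continuous (V := R_NormedModule)); exists (f' s); exact (Df s Hs).
Qed.

Lemma Derive_C1 (f f' : R -> R) (s : R) :
  is_C1_derive f f' -> a <= s <= b -> Derive f s = f' s.
Proof. intros [Df _] Hs; exact (is_derive_unique _ _ _ (Df s Hs)). Qed.

Lemma seg_continuous_Derive (f f' : R -> R) :
  is_C1_derive f f' -> seg_continuous (Derive f).
Proof.
  intros Hf; apply (seg_continuous_ext _ f'); [|exact (proj2 Hf)].
  intros s Hs; exact (Derive_C1 _ _ _ Hf Hs).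
Qed.

Lemma is_C1_derive_C1_on (f : R -> R) : C1_on a b f -> is_C1_derive f (Derive f).
Proof.
  intros Hf; split.
  - intros s Hs; exact (Derive_correct _ _ (proj1 (Hf s Hs))).
  - apply seg_continuous_within; intros s Hs; exact (proj2 (Hf s Hs)).
Qed.

Lemma is_C1_derive_const (c : R) : is_C1_derive (fun _ => c) (fun _ => 0).
Proof. split; [intros s _; apply (is_derive_const c s) | apply seg_continuous_const]. Qed.

Lemma is_C1_derive_plus (f f' g g' : R -> R) :
  is_C1_derive f f' -> is_C1_derive g g' ->
  is_C1_derive (fun t => f t + g t) (fun t => f' t + g' t).
Proof.
  intros [Df Cf] [Dg Cg]; split; [|apply seg_continuous_plus; assumption].
  intros s Hs; exact (is_derive_plus f g s _ _ (Df s Hs) (Dg s Hs)).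
Qed.

Lemma is_C1_derive_opp (f f' : R -> R) :
  is_C1_derive f f' -> is_C1_derive (fun t => - f t) (fun t => - f' t).
Proof.
  intros [Df Cf]; split; [|apply seg_continuous_opp; assumption].
  intros s Hs; exact (is_derive_opp f s _ (Df s Hs)).
Qed.

Lemma is_C1_derive_mult (f f' g g' : R -> R) :
  is_C1_derive f f' -> is_C1_derive g g' ->
  is_C1_derive (fun t => f t * g t) (fun t => f' t * g t + f t * g' t).
Proof.
  intros Hf Hg; pose proof (seg_continuous_C1 _ _ Hf) as Cf0;
    pose proof (seg_continuous_C1 _ _ Hg) as Cg0.
  destruct Hf as [Df Cf], Hg as [Dg Cg]; split.
  - intros s Hs; apply (is_derive_mult f g s _ _ (Df s Hs) (Dg s Hs)), Rmult_comm.
  - apply seg_continuous_plus; apply seg_continuous_mult; assumption.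
Qed.

Lemma ex_RInt_seg_continuous (f : R -> R) : seg_continuous f -> ex_RInt f a b.
Proof.
  intros Hf; apply (ex_RInt_ext (fun t => f (clamp t))).
  - intros t Ht; rewrite Rmin_left, Rmax_right in Ht by exact hab.
    rewrite clamp_id by lra; reflexivity.
  - apply (ex_RInt_continuous (V := R_CompleteNormedModule)); intros t Ht.
    rewrite Rmin_left, Rmax_right in Ht by exact hab; exact (Hf t Ht).
Qed.

Lemma RInt_Derive_C1 (f f' : R -> R) :
  is_C1_derive f f' -> RInt (Derive f) a b = f b - f a.
Proof.
  intros Hf; rewrite (RInt_ext _ (fun t => f' (clamp t))).
  - apply is_RInt_unique, (is_RInt_derive f); intros t Ht;
      rewrite Rmin_left, Rmax_right in Ht by exact hab.
    + rewrite clamp_id by exact Ht; exact (proj1 Hf t Ht).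
    + exact (proj2 Hf t Ht).
  - intros t Ht; rewrite Rmin_left, Rmax_right in Ht by exact hab.
    rewrite clamp_id by lra; apply (Derive_C1 _ _ _ Hf); lra.
Qed.

End Segment.

Ltac solve_C1 hab :=
  lazymatch goal with
  | |- is_C1_derive _ _ (fun _ => ?c) _ => apply is_C1_derive_const
  | |- is_C1_derive _ _ (fun t => @?f t + @?g t) _ => apply is_C1_derive_plus; solve_C1 hab
  | |- is_C1_derive _ _ (fun t => - @?f t) _ => apply is_C1_derive_opp; solve_C1 hab
  | |- is_C1_derive _ _ (fun t => @?f t * @?g t) _ => apply (is_C1_derive_mult _ _ hab); solve_C1 hab
  | |- is_C1_derive _ _ (fun t => ?f t ?i ?k) _ =>
      match goal with H : C1_vec9 _ _ f |- _ => exact (is_C1_derive_C1_on _ _ hab _ (H i k)) end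
  | |- is_C1_derive _ _ (fun t => ?f t ?k) _ =>
      match goal with H : C1_vec _ _ f |- _ => exact (is_C1_derive_C1_on _ _ hab _ (H k)) end
  end.

Ltac solve_seg_continuous hab :=
  lazymatch goal with
  | |- seg_continuous _ _ (fun _ => ?c) => apply seg_continuous_const
  | |- seg_continuous _ _ (fun t => @?f t + @?g t) =>
      apply seg_continuous_plus; solve_seg_continuous hab
  | |- seg_continuous _ _ (fun t => - @?f t) => apply seg_continuous_opp; solve_seg_continuous hab
  | |- seg_continuous _ _ (fun t => @?f t * @?g t) =>
      apply seg_continuous_mult; solve_seg_continuous hab
  | |- seg_continuous _ _ (Derive _) =>
      eapply (seg_continuous_Derive _ _ hab); solve_C1 hab
  | |- _ => eapply (seg_continuous_C1 _ _ hab); solve_C1 hab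
  end.

Ltac is_component f :=
  match f with
  | fun t => ?g t ?k => idtac
  | fun t => ?g t ?i ?k => idtac
  end.

(* Expands every derivative of a composite expression by the sum/product rules,
   keeping the derivatives of the coordinates of the data as atoms. *)
Ltac rewrite_Derive hab Hs :=
  repeat match goal with
  | |- context [Derive ?f ?x] =>
      tryif is_component f then fail else
        (let Hf := fresh in
         eassert (Hf : is_C1_derive _ _ f _) by solve_C1 hab;
         rewrite (Derive_C1 _ _ _ _ x Hf Hs); clear Hf)
  end.

(* [Rminus] and [Rdiv] are unfolded so that the tactics above only meet [+], [-x], [*]. *)
Ltac unfold_coordinates :=
  cbv beta iota delta [dot dot9 sum3 vadd vsub vadd9 Rmat Rmul RTmul JN JNmul JNTmul
    Lmat Lmul LTmul dvec dvec9 JK JM cross I3_eqb Rminus Rdiv].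

Section VirtualPower.
Variables (L : R) (phi vphi N M : R -> vec) (d vd : R -> vec9).
Hypotheses (hL : 0 <= L)
  (Hphi : C1_vec 0 L phi) (Hvphi : C1_vec 0 L vphi) (HN : C1_vec 0 L N) (HM : C1_vec 0 L M)
  (Hd : C1_vec9 0 L d) (Hvd : C1_vec9 0 L vd).

Definition stress_power (s : R) : R :=
  dot (N s) (vadd (RTmul (d s) (dvec vphi s)) (JNTmul (dvec phi s) (vd s)))
  + dot (M s) (JK d vd s).

Definition balance_power (s : R) : R :=
  - dot (vphi s) (dvec (fun t => Rmul (d t) (N t)) s)
  + dot9 (vd s) (vadd9 (JNmul (dvec phi s) (N s)) (JM d M s)).

Definition boundary_power (s : R) : R :=
  dot (vphi s) (Rmul (d s) (N s)) - dot (M s) (Lmul (d s) (vd s)).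

Lemma Derive_boundary_power (s : R) : 0 <= s <= L ->
  Derive boundary_power s = stress_power s - balance_power s.
Proof.
  intros Hs; unfold stress_power, balance_power, boundary_power; unfold_coordinates.
  rewrite_Derive hL Hs; ring.
Qed.

Lemma RInt_stress_minus_balance_power :
  RInt stress_power 0 L - RInt balance_power 0 L = boundary_power L - boundary_power 0.
Proof.
  assert (Cs : seg_continuous 0 L stress_power)
    by (unfold stress_power; unfold_coordinates; solve_seg_continuous hL).
  assert (Cb : seg_continuous 0 L balance_power)
    by (unfold balance_power; unfold_coordinates; solve_seg_continuous hL).
  assert (Db : exists b', is_C1_derive 0 L boundary_power b')
    by (eexists; unfold boundary_power; unfold_coordinates; solve_C1 hL).
  destruct Db as [b' Db].
  change (RInt stress_power 0 L - RInt balance_power 0 L)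
    with (minus (RInt stress_power 0 L) (RInt balance_power 0 L)).
  rewrite <- (RInt_minus (V := R_CompleteNormedModule) _ _ _ _
    (ex_RInt_seg_continuous _ _ hL _ Cs) (ex_RInt_seg_continuous _ _ hL _ Cb)).
  rewrite <- (RInt_Derive_C1 _ _ hL _ _ Db).
  apply RInt_ext; intros s Hs; rewrite Rmin_left, Rmax_right in Hs by exact hL.
  symmetry; apply Derive_boundary_power; lra.
Qed.

End VirtualPower.

Theorem mainTheorem1 (L : R) (phi vphi N M : R -> vec) (d vd : R -> vec9) :
  0 < L ->
  C1_vec 0 L phi -> C1_vec 0 L vphi -> C1_vec 0 L N -> C1_vec 0 L M ->
  C1_vec9 0 L d -> C1_vec9 0 L vd ->
  (forall s, 0 <= s <= L -> frame (d s)) ->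
  RInt (fun s =>
      dot (N s) (vadd (RTmul (d s) (dvec vphi s)) (JNTmul (dvec phi s) (vd s)))
    + dot (M s) (JK d vd s)) 0 L
  - RInt (fun s =>
      - dot (vphi s) (dvec (fun t => Rmul (d t) (N t)) s)
    + dot9 (vd s) (vadd9 (JNmul (dvec phi s) (N s)) (JM d M s))) 0 L
  = (dot (vphi L) (Rmul (d L) (N L)) + dot (omega (d L) (vd L)) (Rmul (d L) (M L)))
  - (dot (vphi 0) (Rmul (d 0) (N 0)) + dot (omega (d 0) (vd 0)) (Rmul (d 0) (M 0))).
Proof.
  intros HL Hphi Hvphi HN HM Hd Hvd Hframe.
  transitivity (boundary_power vphi N M d vd L - boundary_power vphi N M d vd 0).
  - apply RInt_stress_minus_balance_power; (lra || assumption).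
  - unfold boundary_power; rewrite !dot_omega_frame by (apply Hframe; lra); ring.
Qed.
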